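(* Assume $|V|\ge2$. Set $\kappa_\lambda:=\min_{x\ne y}\kappa_\lambda(x,y)$ for $\lambda>0$ and $\underline\kappa_0:=\min_{x\ne y}\underline\kappa(x,y)$. Then $\liminf_{\lambda\downarrow0}\kappa_\lambda/\lambda=\underline\kappa_0$.
   Context: Let $H=(V,E,w)$ be a weighted hypergraph: $V$ is a finite set, $E$ a set of nonempty subsets of $V$, $w\colon E\to\mathbb{R}_{>0}$. Write $x\sim y$ if some $e\in E$ contains both; $H$ is assumed connected. The degree is $d_x=\sum_{e\ni x}w_e>0$, $D=\mathrm{diag}(d_x)$. The distance $d(x,y)$ is the minimal $n$ with a chain $x=z_0\sim\cdots\sim z_n=y$. $\delta_x$ is the indicator of $x$. $\mathbb{R}^V$ carries the inner product $\langle f,g\rangle=\sum_x f(x)g(x)/d_x$ with norm $\|\cdot\|$. For $e\in E$ let $B_e=\mathrm{Conv}\{\delta_x-\delta_y : x,y\in e\}$. The multivalued hypergraph Laplacian is $L(f)=\{\sum_{e}w_e\mathtt{b}_e(\mathtt{b}_e^\top f) : \mathtt{b}_e\in\operatorname{argmax}_{\mathtt b\in B_e}\mathtt b^\top f\}$ and the normalized Laplacian is $\mathcal{L}f=L(D^{-1}f)$, a maximal monotone operator on $(\mathbb{R}^V,\langle\cdot,\cdot\rangle)$. For $\lambda>0$ the resolvent $J_\lambda=(I+\lambda\mathcal L)^{-1}$ is a single-valued map $\mathbb{R}^V\to\mathbb{R}^V$ (equivalently $J_\lambda f=\operatorname{argmin}_g\{\frac{1}{2\lambda}\|f-g\|^2+Q(D^{-1}g)\}$,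 $Q(g)=\frac12\sum_e w_e\max_{x,y\in e}(g(x)-g(y))^2$). A function $f$ is weighted $1$-Lipschitz if $|f(x)/d_x-f(y)/d_y|\le d(x,y)$ for all $x,y$; $\mathrm{Lip}^1_w(V)$ denotes the set of such functions. $\mathrm{KD}_\lambda(x,y)=\sup\{\langle J_\lambda f,\delta_x-\delta_y\rangle : f\in\mathrm{Lip}^1_w(V)\}$. For $x\ne y$: $\kappa_\lambda(x,y)=1-\mathrm{KD}_\lambda(x,y)/d(x,y)$ and $\underline\kappa(x,y)=\liminf_{\lambda\downarrow0}\kappa_\lambda(x,y)/\lambda$. *)

From HB Require Import structures.
From mathcomp Require Import all_boot all_order all_algebra.
From mathcomp Require Import all_classical all_reals all_analysis.
Set Implicit Arguments. Unset Strict Implicit. Unset Printing Implicit Defensive.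
Import Order.TTheory GRing.Theory Num.Theory.
Import numFieldNormedType.Exports.
Local Open Scope classical_set_scope.
Local Open Scope ring_scope.

Section Hypergraph.
Variables (R : realType) (V : finType) (E : {set {set V}}) (w : {set V} -> R).

Definition wf_hypergraph : Prop :=
  forall e, e \in E -> (0 < #|e|)%N /\ 0 < w e.

Definition adj (x y : V) : bool := [exists e in E, (x \in e) && (y \in e)].

Definition chain (n : nat) (x y : V) : Prop :=
  exists s : seq V, size s = n /\ path adj x s /\ last x s = y.

Definition connected_hg : Prop := forall x y, exists n, chain n x y.

Definition hdist (x y : V) : nat :=
  xget 0%N [set n | chain n x y /\ forall m, chain m x y -> (n <= m)%N].

Definition deg (x : V) : R := \sum_(e in E | x \in e) w e.

Definition ip (f g : V -> R) : R := \sum_x f x * g x / deg x.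

Definition nrm2 (f : V -> R) : R := ip f f.

Definition Qen (g : V -> R) : R :=
  2^-1 * \sum_(e in E) w e *
    \big[Num.max/0]_(p : V * V | (p.1 \in e) && (p.2 \in e)) (g p.1 - g p.2) ^+ 2.

Definition Dinv (g : V -> R) : V -> R := fun x => g x / deg x.

Definition resolvent_energy (lam : R) (f g : V -> R) : R :=
  (2 * lam)^-1 * nrm2 (fun x => f x - g x) + Qen (Dinv g).

Definition resolvent (lam : R) (f : V -> R) : V -> R :=
  xget (fun _ => 0) [set g | forall h, resolvent_energy lam f g <= resolvent_energy lam f h].

Definition Lipw1 : set (V -> R) :=
  [set f | forall x y, `|f x / deg x - f y / deg y| <= (hdist x y)%:R].

Definition delta2 (x y : V) : V -> R := fun z => (z == x)%:R - (z == y)%:R.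

Local Open Scope ereal_scope.

Definition KD (lam : R) (x y : V) : \bar R :=
  ereal_sup [set (ip (resolvent lam f) (delta2 x y))%:E | f in Lipw1].

Definition kappa (lam : R) (x y : V) : \bar R :=
  1%:E - KD lam x y * ((hdist x y)%:R^-1)%:E.

Definition kappa_over (x y : V) (lam : R) : \bar R := kappa lam x y * (lam^-1)%:E.

Definition kappa_low (x y : V) : \bar R := limf_einf (kappa_over x y) (0%R)^'+.

Definition kappa_min (lam : R) : \bar R :=
  \big[Order.min/+oo]_(p : V * V | p.1 != p.2) kappa lam p.1 p.2.

Definition kappa_low0 : \bar R :=
  \big[Order.min/+oo]_(p : V * V | p.1 != p.2) kappa_low p.1 p.2.

End Hypergraph.

From HB Require Import structures.
From mathcomp Require Import all_boot all_order all_algebra.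
From mathcomp Require Import all_classical all_reals all_analysis.
From mathcomp Require Import lra.
Set Implicit Arguments. Unset Strict Implicit. Unset Printing Implicit Defensive.
Import Order.TTheory GRing.Theory Num.Theory.
Import numFieldNormedType.Exports.
Local Open Scope classical_set_scope.
Local Open Scope ring_scope.

(* Two general facts suffice, neither depending on the hypergraph:
   - dividing by lambda > 0 commutes with a finite minimum
     ([bigmin_mulr_pos]), so kappa_lambda / lambda is the pointwise minimum
     of the finitely many functions lambda |-> kappa_lambda(x,y) / lambda;
   - along any filter, the liminf of a finite minimum of extended-real
     functions is the minimum of their liminfs ([limf_einf_bigmin]).
   The inequality "liminf of min <= min of liminfs" is monotonicity of the
   liminf ([le_limf_einf_near]); the converse ([bigmin_limf_einf_le]) uses
   that for every real r below all the liminfs, each function eventually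
   exceeds r, hence so does their minimum, and finitely many "eventually"
   conditions hold simultaneously; it is closed by the density criterion
   [lee_real_below]. *)

Local Open Scope ereal_scope.

Lemma lee_real_below (R : realType) (x y : \bar R) :
  (forall r : R, r%:E < x -> r%:E <= y) -> x <= y.
Proof.
case: x => [s| |] below; last by rewrite leNye.
- case: y below => [t| |] below; [|by rewrite leey|].
  + rewrite lee_fin leNgt; apply/negP => lt_ts.
    have mid_lt_s : ((s + t) / 2 < s)%R by rewrite ltr_pdivrMr //; lra.
    have := below ((s + t) / 2)%R; rewrite lte_fin lee_fin => /(_ mid_lt_s).
    by rewrite ler_pdivrMr //; lra.
  + have below_s : (s - 1 < s)%R by lra.
    by have := below (s - 1)%R; rewrite lte_fin leeNy_eq => /(_ below_s).
- case: y below => [t| |] below; [|by rewrite leey|].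
  + by have := below (t + 1)%R (ltry _); rewrite lee_fin => ?; exfalso; lra.
  + by have := below 0%R (ltry _); rewrite leeNy_eq.
Qed.

(* Multiplying by a positive real commutes with a finite minimum; positivity
   (not just nonnegativity) is needed so that the empty minimum +oo is kept. *)
Lemma bigmin_mulr_pos (R : realType) (I : finType) (P : pred I)
    (a : I -> \bar R) (c : R) :
  (0 < c)%R ->
  (\big[Order.min/+oo]_(i | P i) a i) * c%:E
  = \big[Order.min/+oo]_(i | P i) (a i * c%:E).
Proof.
move=> c_gt0; elim/big_rec2: _ => [|i m mc _ <-]; first exact: gt0_mulye.
by apply: mine_pMl; rewrite // lee_fin ltW.
Qed.

Section LiminfOfMin.
Variables (R : realType) (F : set_system R).
Hypothesis FF : Filter F.

Lemma le_limf_einf_near (f g : R -> \bar R) :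
  (\forall x \near F, f x <= g x) -> limf_einf f F <= limf_einf g F.
Proof.
move=> f_le_g; rewrite !limf_einfE.
apply: ge_ereal_sup => _ [U FU <-]; apply: le_ereal_sup_tmp.
exists (ereal_inf (g @` (U `&` [set x | f x <= g x]))).
  by exists (U `&` [set x | f x <= g x]) => //; exact: filterI.
apply: le_ereal_inf_tmp => _ [x [Ux fgx] <-].
by apply: le_trans fgx; apply: ereal_inf_lbound; exists x.
Qed.

Lemma bigmin_limf_einf_le (I : finType) (P : pred I) (g : I -> R -> \bar R) :
  \big[Order.min/+oo]_(i | P i) limf_einf (g i) F
  <= limf_einf (fun x => \big[Order.min/+oo]_(i | P i) g i x) F.
Proof.
apply: lee_real_below => r /bigmin_gtP[_ r_lt_liminf].
have eventually_gt i : \forall x \near F, P i -> r%:E < g i x.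
  case Pi: (P i); last exact: filterE.
  move: (r_lt_liminf i Pi); rewrite limf_einfE => /ereal_sup_gtP[_ [U FU <-]].
  move=> r_lt_inf; apply: filterS FU => x Ux _; apply: lt_le_trans r_lt_inf _.
  by apply: ereal_inf_lbound; exists x.
set U := [set x | forall i, P i -> r%:E < g i x].
have FU : F U by exact: filter_forall.
rewrite limf_einfE; apply: le_ereal_sup_tmp.
exists (ereal_inf ((fun x => \big[Order.min/+oo]_(i | P i) g i x) @` U)).
  by exists U.
apply: le_ereal_inf_tmp => _ [x Ux <-].
by apply/ltW/bigmin_gtP; split; [exact: ltry|exact: Ux].
Qed.

Lemma limf_einf_bigmin (I : finType) (P : pred I) (f : R -> \bar R)
    (g : I -> R -> \bar R) :
  (\forall x \near F, f x = \big[Order.min/+oo]_(i | P i) g i x) ->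
  limf_einf f F = \big[Order.min/+oo]_(i | P i) limf_einf (g i) F.
Proof.
move=> f_min; apply/eqP; rewrite eq_le; apply/andP; split.
  apply: le_bigmin; first exact: leey.
  move=> i Pi; apply: le_limf_einf_near; apply: filterS f_min => x ->.
  exact: bigmin_le_cond.
apply: (le_trans (bigmin_limf_einf_le P g)).
by apply: le_limf_einf_near; apply: filterS f_min => x ->.
Qed.

End LiminfOfMin.

Local Close Scope ereal_scope.

Theorem mainTheorem12 (R : realType) (V : finType) (E : {set {set V}})
    (w : {set V} -> R) :
  wf_hypergraph E w ->
  connected_hg E ->
  (forall x : V, 0 < deg E w x) ->
  (2 <= #|V|)%N ->
  limf_einf (fun lam : R => (kappa_min E w lam * (lam^-1)%:E)%E) (0%R)^'+
  = kappa_low0 E w.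
Proof.
move=> _ _ _ _; apply: limf_einf_bigmin.
near=> lam; rewrite /kappa_min bigmin_mulr_pos // invr_gt0.
by near: lam; exact: nbhs_right_gt.
Unshelve. all: by end_near.
Qed.
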